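(* Let $f:2^V\to\mathbb{Z}_{\ge0}$ be a connectivity function, $T$ a branch decomposition of $f$, $r\in E(T)$, and $(r,C_1,C_2,C_3)$ a global $T$-improvement. Then for every $i\in\{1,2,3\}$ and every node $w\in V(T)$ it holds that $f(T_r[w]\cap C_i)\le f(T_r[w])$. Moreover, if $T_r[w]\cap C_i\neq\emptyset$, then $f(T_r[w]\cap C_i)=f(T_r[w])$ if and only if $T_r[w]\subseteq C_i$.
   Context: A connectivity function $f:2^V\to\mathbb{Z}_{\ge0}$ ($V$ finite) satisfies $f(\emptyset)=0$, $f(X)=f(V\setminus X)$, and $f(X\cup Y)+f(X\cap Y)\le f(X)+f(Y)$. A branch decomposition of $f$ is a tree $T$ whose nodes have degree 1 or 3 together with a bijection from $V$ to its leaves; elements of $V$ are identified with leaves. For an edge $uv$ of $T$, $T[uv]$ denotes the set of leaves closer to $u$ than to $v$. For an edge $r=uv$ and a node $w$, the $r$-subtree of $w$ consists of the nodes $x$ such that $w$ lies on the unique path from $x$ to the edge $r$ (including $w$), and $T_r[w]\subseteq V$ is the set of leaves in the $r$-subtree of $w$ (so $T_r[u]=T[uv]$, $T_r[v]=T[vu]$). For $W\subseteq V$, a $W$-improvement is a tripartition $(C_1,C_2,C_3)$ of $V$ (pairwise disjoint, possibly empty, union $V$) with $f(C_i)<f(W)/2$, $f(C_i\cap W)<f(W)$, $f(C_i\cap(V\setminus W))<f(W)$ for each $i$. Its width is $\max_i f(C_i)$, its sum-width is $\sum_i f(C_i)$, and its arity is the number of nonempty $C_i$. A $W$-improvement is minimum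 if it has minimum width among all $W$-improvements, subject to that minimum arity, and subject to those minimum sum-width. For $r=uv\in E(T)$ and $W=T[uv]$, a $T$-improvement on $r$ is a tuple $(r,C_1,C_2,C_3)$ where $(C_1,C_2,C_3)$ is a minimum $W$-improvement; it intersects a node $w$ if $T_r[w]$ intersects at least two of $C_1,C_2,C_3$. A global $T$-improvement is a $T$-improvement on $r$ that intersects the minimum number of nodes of $T$ among all $T$-improvements on $r$. *)

From mathcomp Require Import all_boot.
From mathcomp Require Import boolp.
Set Implicit Arguments. Unset Strict Implicit. Unset Printing Implicit Defensive.

Section Defs.
Variables (V N : finType).

Definition connectivity (f : {set V} -> nat) : Prop :=
  [/\ f set0 = 0,
      forall X, f X = f (~: X) &
      forall X Y, f (X :|: Y) + f (X :&: Y) <= f X + f Y].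

(* p is the simple path x :: p from x to y *)
Definition tpath (e : rel N) (x y : N) (p : seq N) : Prop :=
  [/\ path e x p, last x p = y & uniq (x :: p)].

Definition is_tree (e : rel N) : Prop :=
  forall x y, exists! p, tpath e x y p.

Definition deg (e : rel N) (x : N) : nat := #|[set y | e x y]|.

Definition branch_decomposition (e : rel N) (leaf : V -> N) : Prop :=
  [/\ symmetric e, irreflexive e, is_tree e,
      forall x, deg e x = 1 \/ deg e x = 3 &
      injective leaf /\ (forall x, deg e x = 1 <-> exists a, leaf a = x)].

(** x is in the r-subtree of w (r = uv): w lies on the unique path from x to
    the edge r (the path from x to the nearer endpoint of r, not containing the
    other endpoint). *)
Definition in_rsubtree (e : rel N) (u v w x : N) : Prop :=
  (exists p, tpath e x u p /\ v \notin x :: p /\ w \in x :: p) \/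
  (exists p, tpath e x v p /\ u \notin x :: p /\ w \in x :: p).

Definition Tr (e : rel N) (leaf : V -> N) (u v w : N) : {set V} :=
  [set a | `[< in_rsubtree e u v w (leaf a) >]].

(** T[uv] := T_r[u] for r = uv : leaves closer to u than to v. *)
Definition Tside (e : rel N) (leaf : V -> N) (u v : N) : {set V} :=
  Tr e leaf u v u.

Definition tripartition (C : 'I_3 -> {set V}) : Prop :=
  (forall i j, i != j -> [disjoint C i & C j]) /\ \bigcup_i C i = setT.

Definition improvement (f : {set V} -> nat) (W : {set V})
  (C : 'I_3 -> {set V}) : Prop :=
  tripartition C /\
  forall i, [/\ 2 * f (C i) < f W, f (C i :&: W) < f W &
                f (C i :&: ~: W) < f W].

Definition width (f : {set V} -> nat) (C : 'I_3 -> {set V}) : nat :=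
  \max_i f (C i).
Definition sum_width (f : {set V} -> nat) (C : 'I_3 -> {set V}) : nat :=
  \sum_i f (C i).
Definition arity (C : 'I_3 -> {set V}) : nat := #|[set i | C i != set0]|.

Definition min_improvement (f : {set V} -> nat) (W : {set V})
  (C : 'I_3 -> {set V}) : Prop :=
  improvement f W C /\
  forall D, improvement f W D ->
    width f C < width f D \/
    (width f C = width f D /\
      (arity C < arity D \/
       (arity C = arity D /\ sum_width f C <= sum_width f D))).

Definition T_improvement (f : {set V} -> nat) (e : rel N) (leaf : V -> N)
  (u v : N) (C : 'I_3 -> {set V}) : Prop :=
  e u v /\ min_improvement f (Tside e leaf u v) C.

Definition intersects (e : rel N) (leaf : V -> N) (u v : N)
  (C : 'I_3 -> {set V}) (w : N) : bool :=
  1 < #|[set i | Tr e leaf u v w :&: C i != set0]|.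

Definition n_intersected (e : rel N) (leaf : V -> N) (u v : N)
  (C : 'I_3 -> {set V}) : nat :=
  #|[set w | intersects e leaf u v C w]|.

Definition global_T_improvement (f : {set V} -> nat) (e : rel N)
  (leaf : V -> N) (u v : N) (C : 'I_3 -> {set V}) : Prop :=
  T_improvement f e leaf u v C /\
  forall D, T_improvement f e leaf u v D ->
    n_intersected e leaf u v C <= n_intersected e leaf u v D.

End Defs.

From mathcomp Require Import all_boot.
From mathcomp Require Import boolp.
From mathcomp Require Import zify.
Set Implicit Arguments. Unset Strict Implicit. Unset Printing Implicit Defensive.

(* Write X for T_r[w] and W for T[uv]; X lies entirely on one side of r.
   Moving X into C_i and out of the other parts does not increase f(C_i) when
   f(X) <= f(X :&: C_i), by submodularity, nor f(C_j) for j <> i when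
   f(X) <= f(X :\: C_j), by posimodularity; as X is on one side of r, the
   result is again a W-improvement.  A counterexample to f(X :&: C_i) <= f(X)
   of least size among the sets on one side of r satisfies both conditions
   with a strict decrease at C_i, contradicting minimality.  If equality holds
   but X is not inside C_i, the moved tripartition is still minimum; since the
   sets T_r[w] form a laminar family, it intersects only nodes intersected
   before, and no longer w, contradicting globality. *)

Lemma mem_drop_index (T : eqType) (s : seq T) w x :
  x \in s -> index w s <= index x s -> x \in drop (index w s) s.
Proof.
move=> xs le_wx; have := xs; rewrite -{1}(cat_take_drop (index w s) s) mem_cat.
by rewrite in_take // ltnNge le_wx.
Qed.

Lemma mem_drop_index_total (T : eqType) (s : seq T) w x : w \in s -> x \in s ->
  x \in drop (index w s) s \/ w \in drop (index x s) s.
Proof.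
move=> ws xs; case: (leqP (index w s) (index x s)) => [le_wx | /ltnW le_xw].
  by left; apply: mem_drop_index.
by right; apply: mem_drop_index.
Qed.

Section Tripartitions.
Variable V : finType.
Implicit Types (C : 'I_3 -> {set V}) (W X Y : {set V}) (i j : 'I_3).

Definition absorb C X i : 'I_3 -> {set V} :=
  fun j => if j == i then C i :|: X else C j :\: X.

Definition touched Y C : {set 'I_3} := [set k | Y :&: C k != set0].

Definition one_sided W X := X \subset W \/ X \subset ~: W.

Lemma absorb_sub C X i j : absorb C X i j \subset C j :|: X.
Proof.
rewrite /absorb; case: eqP => [-> // | _].
exact: subset_trans (subsetDl _ _) (subsetUl _ _).
Qed.

Lemma absorb_sup C X i j : C j :\: X \subset absorb C X i j.
Proof.
rewrite /absorb; case: eqP => [-> | _] //.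
exact: subset_trans (subsetDl _ _) (subsetUl _ _).
Qed.

Lemma absorb_tripartition C X i : tripartition C -> tripartition (absorb C X i).
Proof.
move=> [C_disj C_cover]; split=> [j k jk | ].
  wlog ki : j k jk / k != i.
    move=> gen; have [ki | ] := eqVneq k i; last exact: gen.
    by subst k; rewrite disjoint_sym gen // eq_sym.
  rewrite disjoints_subset; apply: subset_trans (absorb_sub C X i j) _.
  by rewrite /absorb (negPf ki) setCD setSU // -disjoints_subset C_disj.
apply/setP => a; rewrite inE; apply/bigcupP.
have [aX | naX] := boolP (a \in X).
  by exists i; rewrite // /absorb eqxx inE aX orbT.
have /bigcupP[j _ aCj] : a \in \bigcup_j C j by rewrite C_cover inE.
by exists j => //; apply: (subsetP (absorb_sup C X i j)); rewrite inE naX.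
Qed.

Lemma absorbI C W X i j : X \subset W ->
  absorb C X i j :&: W = absorb (fun k => C k :&: W) X i j.
Proof.
by move=> XW; rewrite /absorb; case: eqP => _; rewrite ?setIUl ?(setIidPl XW) ?setIDAC.
Qed.

Lemma absorbIC C W X i j : X \subset W -> absorb C X i j :&: ~: W = C j :&: ~: W.
Proof.
move=> XW; have XcW : [disjoint X & ~: W] by rewrite disjoints_subset setCK.
rewrite /absorb; case: eqP => [-> | _]; first by rewrite setIUl (disjoint_setI0 XcW) setU0.
by rewrite setIDAC; apply/setDidPl; apply: disjointWl (subsetIr _ _) _; rewrite disjoint_sym.
Qed.

Lemma setDI_disjoint X (A B : {set V}) : [disjoint B & A] -> (X :\: A) :&: B = X :&: B.
Proof.
by move=> BA; rewrite setIDAC; apply/setDidPl; apply: disjointWl (subsetIr _ _) BA.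
Qed.

Lemma one_sided_subset W X Y : Y \subset X -> one_sided W X -> one_sided W Y.
Proof. by move=> YX [XW | XcW]; [left | right]; apply: subset_trans YX _. Qed.

Lemma touched_absorb_subset C X Y i : X :&: C i != set0 ->
  Y :&: X = set0 \/ X \subset Y -> touched Y (absorb C X i) \subset touched Y C.
Proof.
move=> XCi0 YX; apply/subsetP => k; rewrite !inE /absorb.
case: (k =P i) => [-> | _] YDk.
  case: YX => [YX0 | XY]; first by rewrite setIUr YX0 setU0 in YDk.
  by apply: contraNneq XCi0 => YCi0; rewrite -subset0 -YCi0 setSI.
by apply: contraNneq YDk => YCk0; rewrite -subset0 -YCk0 setIS // subsetDl.
Qed.

Lemma touched_absorb_small C X Y i : Y \subset X -> #|touched Y (absorb C X i)| <= 1.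
Proof.
move=> YX; rewrite -[leqRHS](cards1 i) subset_leq_card //; apply/subsetP => k.
rewrite !inE /absorb; case: (k =P i) => // _; apply: contraNT => _.
by apply/eqP/setP => a; rewrite !inE; apply/negP => /and3P[/(subsetP YX) -> ].
Qed.

Lemma touched_two C X i : tripartition C -> X :&: C i != set0 -> ~~ (X \subset C i) ->
  1 < #|touched X C|.
Proof.
move=> [_ C_cover] XCi0 /subsetPn[a aX naCi].
have /bigcupP[j _ aCj] : a \in \bigcup_j C j by rewrite C_cover inE.
have ij : i != j by apply: contraNneq naCi => ->.
apply: leq_trans (_ : 1 < #|[set i; j]|) _; first by rewrite cards2 ij.
apply: subset_leq_card; apply/subsetP => k.
rewrite !inE => /orP[] /eqP -> //; by apply/set0Pn; exists a; rewrite inE aX.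
Qed.

Lemma arity_touched C : arity C = #|touched setT C|.
Proof. by apply: eq_card => k; rewrite !inE setTI. Qed.

Lemma arity_absorb_le C X i : X :&: C i != set0 -> arity (absorb C X i) <= arity C.
Proof.
move=> XCi0; rewrite !arity_touched subset_leq_card // touched_absorb_subset //.
by right; apply: subsetT.
Qed.

End Tripartitions.

Section Connectivity.
Variables (V : finType) (f : {set V} -> nat).
Hypothesis f_conn : connectivity f.
Implicit Types (C D : 'I_3 -> {set V}) (W X Y : {set V}) (i j : 'I_3).

Lemma conn_set0 : f set0 = 0.
Proof. by case: f_conn. Qed.

Lemma conn_setC X : f (~: X) = f X.
Proof. by case: f_conn => _ fC _; rewrite -fC. Qed.

Lemma conn_submod X Y : f (X :|: Y) + f (X :&: Y) <= f X + f Y.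
Proof. by case: f_conn. Qed.

Lemma conn_posimod X Y : f (X :\: Y) + f (Y :\: X) <= f X + f Y.
Proof.
have := conn_submod Y (~: X).
by rewrite setUC -setCD !conn_setC -setDE [f Y + _]addnC.
Qed.

Lemma absorb_le C X i : f X <= f (X :&: C i) ->
  (forall j, j != i -> f X <= f (X :\: C j)) -> forall j, f (absorb C X i j) <= f (C j).
Proof.
move=> le_Ci le_Cj j; rewrite /absorb; case: eqP => [-> | /eqP ji].
  by have := conn_submod (C i) X; rewrite setIC; lia.
by have := conn_posimod (C j) X; have := le_Cj j ji; lia.
Qed.

Lemma improvement_setC W C : improvement f W C -> improvement f (~: W) C.
Proof. by move=> [C_tri C_bnd]; split=> // j; case: (C_bnd j); rewrite conn_setC setCK. Qed.

Lemma absorb_improvement W C X i : improvement f W C -> one_sided W X ->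
  f X <= f (X :&: C i) -> (forall j, j != i -> f X <= f (X :\: C j)) ->
  improvement f W (absorb C X i).
Proof.
move=> C_imp X_side le_Ci le_Cj.
wlog XW : W C_imp {X_side} / X \subset W.
  move=> gen; case: X_side => [XW | XcW]; first exact: gen.
  by rewrite -[W]setCK; apply/improvement_setC/gen => //; apply: improvement_setC.
have [C_tri C_bnd] := C_imp; have D_le := absorb_le le_Ci le_Cj.
split; first exact: absorb_tripartition.
move=> j; have [bnd_j bndW_j bndcW_j] := C_bnd j; split.
- by have := D_le j; lia.
- rewrite absorbI //; apply: leq_ltn_trans bndW_j.
  apply: (absorb_le (C := fun k => C k :&: W)) => [|k ki].
    by rewrite setIA setIAC (setIidPl XW).
  rewrite setDIr (_ : X :\: W = set0) ?setU0; first exact: le_Cj.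
  by apply/eqP; rewrite setD_eq0.
- by rewrite absorbIC.
Qed.

Lemma width_le C D : (forall j, f (D j) <= f (C j)) -> width f D <= width f C.
Proof.
move=> le_DC; apply/bigmax_leqP => j _; apply: leq_trans (le_DC j) _.
exact: (leq_bigmax (F := fun k => f (C k))).
Qed.

Lemma sum_width_le C D : (forall j, f (D j) <= f (C j)) -> sum_width f D <= sum_width f C.
Proof. by move=> le_DC; apply: leq_sum => j _. Qed.

Lemma sum_width_lt C D i : (forall j, f (D j) <= f (C j)) -> f (D i) < f (C i) ->
  sum_width f D < sum_width f C.
Proof.
move=> le_DC lt_i; rewrite /sum_width (bigD1 i) //= [leqRHS](bigD1 i) //= -addSn.
by apply: leq_add lt_i _; apply: leq_sum.
Qed.

Lemma min_improvement_cut_le W C i X : min_improvement f W C -> one_sided W X ->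
  f (X :&: C i) <= f X.
Proof.
move=> [C_imp C_lex]; have [[C_disj _] _] := C_imp.
elim: {X}#|X|.+1 {-2}X (ltnSn #|X|) => // n IHn X X_small X_side.
rewrite leqNgt; apply/negP => lt_X_XCi.
have XCi0 : X :&: C i != set0 by apply: contraTneq lt_X_XCi => ->; rewrite conn_set0.
have le_Cj j : j != i -> f X <= f (X :\: C j).
  move=> ji; have [XCj0 | XCj0] := eqVneq (X :&: C j) set0.
    by rewrite (setDidPl _) // -setI_eq0 XCj0.
  have XCj_small : #|X :\: C j| < n.
    rewrite cardsD; have := subset_leq_card (subsetIl X (C j)).
    by move: XCj0 X_small; rewrite -card_gt0; lia.
  have := IHn _ XCj_small (one_sided_subset (subsetDl _ _) X_side).
  by rewrite setDI_disjoint ?C_disj 1?eq_sym //; lia.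
have D_le := absorb_le (ltnW lt_X_XCi) le_Cj.
have lt_Di : f (absorb C X i i) < f (C i).
  by rewrite /absorb eqxx; have := conn_submod (C i) X; rewrite setIC; lia.
have := C_lex _ (absorb_improvement C_imp X_side (ltnW lt_X_XCi) le_Cj).
have := width_le D_le; have := arity_absorb_le XCi0; have := sum_width_lt D_le lt_Di.
lia.
Qed.

Lemma min_improvement_absorb W C X i : min_improvement f W C -> one_sided W X ->
  X :&: C i != set0 -> f (X :&: C i) = f X -> min_improvement f W (absorb C X i).
Proof.
move=> C_min X_side XCi0 eq_XCi; have [C_imp C_lex] := C_min; have [[C_disj _] _] := C_imp.
have le_Ci : f X <= f (X :&: C i) by rewrite eq_XCi.
have le_Cj j : j != i -> f X <= f (X :\: C j).
  move=> ji; rewrite -[leqLHS]eq_XCi -(setDI_disjoint X (C_disj i j _)) 1?eq_sym //.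
  exact: min_improvement_cut_le (one_sided_subset (subsetDl _ _) X_side).
have D_le := absorb_le le_Ci le_Cj.
have D_imp := absorb_improvement C_imp X_side le_Ci le_Cj.
split=> // E E_imp; have := C_lex E E_imp; have := C_lex _ D_imp.
have := width_le D_le; have := arity_absorb_le XCi0; have := sum_width_le D_le.
lia.
Qed.

End Connectivity.

Section BranchTree.
Variables (N : finType) (e : rel N).
Hypotheses (e_sym : symmetric e) (e_tree : is_tree e).

Lemma tpath_uniq x y p q : tpath e x y p -> tpath e x y q -> p = q.
Proof. by case: (e_tree x y) => r [_ r_uniq] /r_uniq <- /r_uniq <-. Qed.

Definition nearer u v a := exists p, tpath e a u p /\ v \notin a :: p.

Definition nearer_via u v w a :=
  exists p, tpath e a u p /\ v \notin a :: p /\ w \in a :: p.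

Lemma nearer_excl u v a : e u v -> nearer u v a -> nearer v u a -> False.
Proof.
move=> euv [p [[p_path p_last p_uniq] v_notin]] [q [q_tpath u_notin]].
have /(tpath_uniq q_tpath) q_eq : tpath e a v (rcons p v).
  split; first by rewrite rcons_path p_path p_last.
    by rewrite last_rcons.
  by rewrite -rcons_cons rcons_uniq v_notin p_uniq.
by move: u_notin; rewrite q_eq -rcons_cons mem_rcons inE -p_last mem_last orbT.
Qed.

Lemma tpath_drop a y p w : tpath e a y p -> w \in a :: p ->
  exists q, tpath e w y q /\ w :: q = drop (index w (a :: p)) (a :: p).
Proof.
move=> [p_path p_last p_uniq] w_in; set s := a :: p; set k := index w s.
have s_drop : drop k s = w :: drop k.+1 s by rewrite (drop_nth w) ?index_mem ?nth_index.
exists (drop k.+1 s); split=> //; split.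
- have : sorted e (drop k s) by apply: drop_sorted.
  by rewrite s_drop.
- have -> : y = last w s by rewrite -p_last.
  by rewrite -[s in RHS](cat_take_drop k) last_cat s_drop.
- by rewrite -s_drop drop_uniq.
Qed.

Lemma nearer_via_nearer u v w a : nearer_via u v w a -> nearer u v w /\ nearer u v a.
Proof.
move=> [p [p_tpath [v_notin w_in]]]; split; last by exists p.
have [q [q_tpath q_drop]] := tpath_drop p_tpath w_in.
by exists q; split=> //; rewrite q_drop; apply/negP => /mem_drop; apply/negP.
Qed.

Lemma nearer_via_self u v a : nearer u v a -> nearer_via u v u a.
Proof.
move=> [p [p_tpath v_notin]]; exists p; do 2!split=> //.
by case: p_tpath => _ <- _; apply: mem_last.
Qed.

Lemma nearer_via_excl u v w x a : e u v -> nearer_via u v w a -> nearer_via v u x a -> False.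
Proof.
by move=> euv /nearer_via_nearer[_ a_u] /nearer_via_nearer[_ a_v]; apply: nearer_excl a_v.
Qed.

Lemma in_rsubtree_towards_r u v a p w x : e u v -> tpath e a u p -> v \notin a :: p ->
  w \in a :: p -> x \in drop (index w (a :: p)) (a :: p) ->
  forall b, in_rsubtree e u v w b -> in_rsubtree e u v x b.
Proof.
move=> euv p_tpath v_notin w_in x_after b.
have [w_near _] : nearer u v w /\ nearer u v a by apply: nearer_via_nearer; exists p.
case=> [[q [q_tpath [q_v q_w]]] | /nearer_via_nearer[w_far _]]; last first.
  by case: (nearer_excl euv w_near w_far).
have [p' [p'_tpath p'_drop]] := tpath_drop p_tpath w_in.
have [q' [q'_tpath q'_drop]] := tpath_drop q_tpath q_w.
rewrite -p'_drop (tpath_uniq p'_tpath q'_tpath) q'_drop in x_after.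
by left; exists q; do 2!split=> //; apply: mem_drop x_after.
Qed.

Variables (V : finType) (leaf : V -> N).

Lemma mem_Tr u v w a : reflect (in_rsubtree e u v w (leaf a)) (a \in Tr e leaf u v w).
Proof. by rewrite inE; apply: asboolP. Qed.

Lemma Tr_sym u v w : Tr e leaf u v w = Tr e leaf v u w.
Proof. by apply/setP => a; apply/mem_Tr/mem_Tr; rewrite /in_rsubtree; tauto. Qed.

Lemma mem_Tside u v a : a \in Tside e leaf u v <-> nearer u v (leaf a).
Proof.
split=> [/mem_Tr[/nearer_via_nearer[] // | [p [_ [u_notin u_in]]]] | /nearer_via_self a_via].
  by rewrite u_in in u_notin.
by apply/mem_Tr; left.
Qed.

Lemma Tr_one_sided u v w : e u v -> one_sided (Tside e leaf u v) (Tr e leaf u v w).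
Proof.
move=> euv; have [w_near | w_far] := pselect (nearer u v w); [left | right];
  apply/subsetP => a /mem_Tr[] /nearer_via_nearer[w_side a_side].
- by apply/mem_Tside.
- by case: (nearer_excl euv w_near w_side).
- by case: (w_far w_side).
- by rewrite inE; apply/negP => /mem_Tside a_near; apply: nearer_excl euv a_near a_side.
Qed.

Lemma Tr_nested_via u v w x a : e u v -> nearer_via u v w a -> nearer_via u v x a ->
  Tr e leaf u v w \subset Tr e leaf u v x \/ Tr e leaf u v x \subset Tr e leaf u v w.
Proof.
move=> euv [p [p_tpath [v_notin w_in]]] [q [q_tpath [_ x_in]]].
rewrite (tpath_uniq q_tpath p_tpath) in x_in.
have [x_after | w_after] := mem_drop_index_total w_in x_in; [left | right];
  apply/subsetP => b /mem_Tr b_in; apply/mem_Tr.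
- exact: (in_rsubtree_towards_r euv p_tpath v_notin w_in x_after).
- exact: (in_rsubtree_towards_r euv p_tpath v_notin x_in w_after).
Qed.

Lemma Tr_laminar u v w x a : e u v -> a \in Tr e leaf u v w -> a \in Tr e leaf u v x ->
  Tr e leaf u v w \subset Tr e leaf u v x \/ Tr e leaf u v x \subset Tr e leaf u v w.
Proof.
move=> euv /mem_Tr[] w_via /mem_Tr[] x_via.
- exact: Tr_nested_via w_via x_via.
- by case: (nearer_via_excl euv w_via x_via).
- by case: (nearer_via_excl euv x_via w_via).
- by rewrite !(Tr_sym u); apply: Tr_nested_via w_via x_via; rewrite e_sym.
Qed.

Lemma intersectsE C u v w :
  intersects e leaf u v C w = (1 < #|touched (Tr e leaf u v w) C|).
Proof. by []. Qed.

Lemma intersects_absorb C i u v w x : e u v -> Tr e leaf u v w :&: C i != set0 ->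
  intersects e leaf u v (absorb C (Tr e leaf u v w) i) x -> intersects e leaf u v C x.
Proof.
rewrite !intersectsE => euv XCi0 x_int.
set X := Tr e leaf u v w in XCi0 x_int *; set Y := Tr e leaf u v x in x_int *.
suff YX : Y :&: X = set0 \/ X \subset Y.
  exact: leq_trans x_int (subset_leq_card (touched_absorb_subset XCi0 YX)).
have [YX0 | /set0Pn[a]] := eqVneq (Y :&: X) set0; first by left.
rewrite inE => /andP[aY aX]; have [XY | YX] := Tr_laminar euv aX aY; first by right.
by rewrite ltnNge (touched_absorb_small C i YX) in x_int.
Qed.

Lemma n_intersected_absorb_lt C i u v w : e u v -> intersects e leaf u v C w ->
  Tr e leaf u v w :&: C i != set0 ->
  n_intersected e leaf u v (absorb C (Tr e leaf u v w) i) < n_intersected e leaf u v C.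
Proof.
move=> euv w_int XCi0; apply/proper_card/properP; split.
  by apply/subsetP => x; rewrite !inE; apply: intersects_absorb.
by exists w; rewrite !inE // intersectsE -leqNgt touched_absorb_small.
Qed.

End BranchTree.

Theorem theorem6 (V N : finType) (f : {set V} -> nat) (e : rel N)
  (leaf : V -> N) (u v : N) (C : 'I_3 -> {set V}) :
  connectivity f ->
  branch_decomposition e leaf ->
  e u v ->
  global_T_improvement f e leaf u v C ->
  forall (i : 'I_3) (w : N),
    f (Tr e leaf u v w :&: C i) <= f (Tr e leaf u v w) /\
    (Tr e leaf u v w :&: C i != set0 ->
      (f (Tr e leaf u v w :&: C i) = f (Tr e leaf u v w) <->
       Tr e leaf u v w \subset C i)).
Proof.
move=> f_conn [e_sym _ e_tree _ _] euv [[_ C_min] C_glob] i w.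
have X_side := Tr_one_sided e_tree leaf w euv.
split; first exact: min_improvement_cut_le C_min X_side.
move=> XCi0; split=> [eq_XCi | /setIidPl -> //].
apply: contraT => X_notin_Ci.
have D_min := min_improvement_absorb f_conn C_min X_side XCi0 eq_XCi.
have w_int : intersects e leaf u v C w.
  by rewrite intersectsE; apply: touched_two X_notin_Ci; case: C_min => -[].
have := C_glob _ (conj euv D_min).
by rewrite leqNgt (n_intersected_absorb_lt e_sym e_tree euv w_int XCi0).
Qed.
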